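(* Let $H$ be a finite-dimensional real or complex Hilbert space with inner product $(\cdot,\cdot)$ and norm $\|u\|=(u,u)^{1/2}$, and let $A:H\to H$ be a self-adjoint operator with eigenvalues $0<\lambda_1\le\lambda_2\le\dots\le\lambda_K$, so that $A\ge \delta I$ with $\delta=\lambda_1>0$. Let $f$ be a real function defined and nonzero on $[\lambda_1,\lambda_K]$ with $f(\lambda_k)>0$ for all $k$, and write $f^{-1}(\lambda)=1/f(\lambda)$. For $\varphi\in H$ let $u=f^{-1}(A)\varphi$ be the solution of $f(A)u=\varphi$. Let $m\ge1$ and let $a_i>0$, $b_i>0$, $i=1,\dots,m$, be such that the function $r(\lambda)=\sum_{i=1}^m a_i e^{-b_i\lambda}$ satisfies $$|r(\lambda)-f^{-1}(\lambda)|\le\varepsilon\quad\text{for all }\lambda\in[\lambda_1,\lambda_K].$$ Let $T=\max_{1\le i\le m}b_i$, let $w:[0,T]\to H$ be the solution of the Cauchy problem $$\frac{dw}{dt}+(A-\delta I)w=0,\quad 0<t\le T,\qquad w(0)=\varphi,$$ and let $\tilde w:[0,T]\to H$ be any function satisfying $\|\tilde w(t)-w(t)\|\le\varepsilon_0\|\varphi\|$ for $0<t\le T$, for some $\varepsilon_0\ge0$. Define $$\hat u=\sum_{i=1}^m a_i e^{-b_i\delta}\,\tilde w(b_i).$$ Then $$\|\hat u-u\|\le\big(\varepsilon+\varepsilon_0\,(f^{-1}(\delta)+\varepsilon)\big)\|\varphi\|.$$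
   Context: Operator functions are defined spectrally: if $\psi_k$ ($\|\psi_k\|=1$) are orthonormal eigenvectors of $A$ with $A\psi_k=\lambda_k\psi_k$, then $g(A)u=\sum_{k=1}^K g(\lambda_k)(u,\psi_k)\psi_k$. In particular $f^{-1}(A)=\sum_k f(\lambda_k)^{-1}(\cdot,\psi_k)\psi_k$, and $f^{-1}(\delta)=1/f(\lambda_1)$. *)

From HB Require Import structures.
From mathcomp Require Import all_boot all_order all_algebra.
From mathcomp Require Import all_classical all_reals all_analysis.
From mathcomp Require Import complex.

Set Implicit Arguments.
Unset Strict Implicit.
Unset Printing Implicit Defensive.
Import Order.TTheory GRing.Theory Num.Theory.
Import numFieldNormedType.Exports.
Local Open Scope classical_set_scope.
Local Open Scope ring_scope.

Section RealH.
Variables (R : realType) (n : nat).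

Definition dotR (u v : 'cV[R]_n) : R := \sum_(i < n) u i 0 * v i 0.
Definition normR (u : 'cV[R]_n) : R := Num.sqrt (dotR u u).

Definition orthonormalR (psi : 'I_n -> 'cV[R]_n) : Prop :=
  forall j k, dotR (psi j) (psi k) = (j == k)%:R.

Definition selfadjointR (A : 'M[R]_n) : Prop := A^T = A.

(* spectral operator function g(A)u = sum_k g(lam_k) (u,psi_k) psi_k *)
Definition specR (g : R -> R) (lam : 'I_n -> R) (psi : 'I_n -> 'cV[R]_n)
  (u : 'cV[R]_n) : 'cV[R]_n :=
  \sum_(k < n) (g (lam k) * dotR u (psi k)) *: psi k.

Definition cauchy_solR (A : 'M[R]_n) (delta T : R) (phi : 'cV[R]_n)
  (w : R -> 'cV[R]_n) : Prop :=
  w 0 = phi /\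
  (forall i : 'I_n, {within `[0, T], continuous (fun t : R => w t i 0)}) /\
  (forall t, 0 < t < T -> forall i : 'I_n,
     is_derive t 1 (fun s => w s i 0) (- ((A - delta%:M) *m w t) i 0)).
End RealH.

Section ComplexH.
Variables (R : realType) (n : nat).
Local Notation C := (R[i]).

Definition dotC (u v : 'cV[C]_n) : C := \sum_(i < n) u i 0 * conjc (v i 0).
Definition normC (u : 'cV[C]_n) : R := Num.sqrt (complex.Re (dotC u u)).

Definition orthonormalC (psi : 'I_n -> 'cV[C]_n) : Prop :=
  forall j k, dotC (psi j) (psi k) = (j == k)%:R.

Definition selfadjointC (A : 'M[C]_n) : Prop := map_mx conjc A^T = A.

Definition specC (g : R -> R) (lam : 'I_n -> R) (psi : 'I_n -> 'cV[C]_n)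
  (u : 'cV[C]_n) : 'cV[C]_n :=
  \sum_(k < n) ((Complex (g (lam k)) 0) * dotC u (psi k)) *: psi k.

(* derivative of an H-valued function of a real variable, taken on the
   real and imaginary parts of each coordinate *)
Definition cauchy_solC (A : 'M[C]_n) (delta T : R) (phi : 'cV[C]_n)
  (w : R -> 'cV[C]_n) : Prop :=
  w 0 = phi /\
  (forall i : 'I_n, {within `[0, T], continuous (fun t : R => complex.Re (w t i 0))}) /\
  (forall i : 'I_n, {within `[0, T], continuous (fun t : R => complex.Im (w t i 0))}) /\
  (forall t, 0 < t < T -> forall i : 'I_n,
     is_derive t 1 (fun s => complex.Re (w s i 0))
       (complex.Re (- ((A - (Complex delta 0)%:M) *m w t) i 0)) /\
     is_derive t 1 (fun s => complex.Im (w s i 0))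
       (complex.Im (- ((A - (Complex delta 0)%:M) *m w t) i 0))).
End ComplexH.

Definition rexp (R : realType) (m : nat) (a b : 'I_m -> R) (x : R) : R :=
  \sum_(i < m) a i * expR (- (b i * x)).

Definition maxb (R : realType) (m : nat) (b : 'I_m -> R) : R :=
  \big[Num.max/0]_(i < m) b i.

From HB Require Import structures.
From mathcomp Require Import all_boot all_order all_algebra.
From mathcomp Require Import all_classical all_reals all_analysis.
From mathcomp Require Import complex.
From mathcomp Require Import ring lra.
Import Order.TTheory GRing.Theory Num.Theory.
Import numFieldNormedType.Exports.
Local Open Scope classical_set_scope.
Local Open Scope ring_scope.

Set Implicit Arguments.
Unset Strict Implicit.

(* In an orthonormal eigenbasis (psi_k) of A the Cauchy problem decouples: the
   coefficient (w(t), psi_k) solves c' = -(lambda_k - delta) c, so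
   w(t) = exp(-t (A - delta)) phi and sum_i a_i e^(-b_i delta) w(b_i) = r(A) phi.
   Hence uhat - u splits into r(A) phi - f^-1(A) phi, of norm at most eps |phi|
   by Parseval, and sum_i a_i e^(-b_i delta) (wt(b_i) - w(b_i)), of norm at most
   r(delta) eps0 |phi| <= (f^-1(delta) + eps) eps0 |phi|.  The real case follows
   by embedding R^n isometrically into C^n. *)

Section ScalarLinearODE.
Variable R : realType.

Lemma within_continuousM (A : set R) (f g : R -> R) :
  {within A, continuous f} -> {within A, continuous g} ->
  {within A, continuous (f * g)}.
Proof. by move=> cf cg x; apply: cvgM; [exact: cf | exact: cg]. Qed.

Lemma within_continuous_sum (A : set R) n (f : 'I_n -> R -> R) :
  (forall i, {within A, continuous f i}) ->
  {within A, continuous \sum_(i < n) f i}.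
Proof.
move=> cf; apply: (big_ind (fun g => {within A, continuous g})) => //.
- by move=> x; apply: cvg_cst.
- by move=> g1 g2; apply: within_continuousD.
Qed.

Lemma linear_ode_expR (h : R -> R) (mu T : R) :
  {within `[0, T], continuous h} ->
  (forall t, 0 < t < T -> is_derive t 1 h (- (mu * h t))) ->
  forall t, 0 <= t <= T -> h t = expR (- (mu * t)) * h 0.
Proof.
move=> hc hd t /andP[t0 tT].
pose g s := h s * expR (mu * s).
have gd x : x \in `]0, t[ -> is_derive x 1 g 0.
  rewrite in_itv /= => /andP[x0 xt].
  have hx : is_derive x 1 h (- (mu * h x)).
    by apply: hd; rewrite x0 (lt_le_trans xt tT).
  have e_mu : is_derive x 1 (fun s => mu * s) mu.
    by apply: is_derive_eq; rewrite -[RHS]mulr1.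
  have ex := is_derive1_comp (is_derive_expR (mu * x)) e_mu.
  have gx := is_deriveM hx ex; apply: is_derive_eq.
  change (h x * (expR (mu * x) * mu) + expR (mu * x) * - (mu * h x) = 0); ring.
have gc : {within `[0, t], continuous g}.
  apply: within_continuousM.
    apply: continuous_subspaceW hc => y /=; rewrite !in_itv /= => /andP[-> yt].
    exact: le_trans yt tT.
  apply: continuous_subspaceT => y.
  apply: continuous_comp; last exact: continuous_expR.
  by apply: continuousM; [exact: cvg_cst | exact: cvg_id].
have [c _] := MVT_segment t0 gd gc.
rewrite mul0r => /eqP; rewrite subr_eq0 /g mulr0 expR0 mulr1 => /eqP <-.
by rewrite mulrCA -expRD addNr expR0 mulr1.
Qed.
End ScalarLinearODE.

Lemma quadratic_form_ge0_le_sqrt (R : realType) (P Q B : R) : 0 <= P -> 0 <= Q ->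
  (forall s t, 0 <= P * s ^+ 2 + 2 * B * s * t + Q * t ^+ 2) ->
  B <= Num.sqrt P * Num.sqrt Q.
Proof.
move=> P0 Q0; rewrite -[P]sqr_sqrtr // -[Q]sqr_sqrtr // !sqrtr_sqr.
rewrite !ger0_norm ?sqrtr_ge0 //.
move: (sqrtr_ge0 P) (sqrtr_ge0 Q); set p := Num.sqrt P; set q := Num.sqrt Q.
move=> p0 q0 qf_ge0.
have [pq_gt0|pq_le0] := ltP 0 (p * q).
  by have := qf_ge0 q (- p); nra.
have pq_0 : p * q = 0 by apply/eqP; rewrite eq_le pq_le0 mulr_ge0.
rewrite pq_0 leNgt; apply/negP => B_gt0.
move/eqP: pq_0; rewrite mulf_eq0 => /orP[/eqP p_0|/eqP q_0].
- by have := qf_ge0 (- (q ^+ 2 + 1)) (2 * B); rewrite p_0; nra.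
- by have := qf_ge0 (2 * B) (- (p ^+ 2 + 1)); rewrite q_0; nra.
Qed.

Section ComplexInnerProduct.
Variables (R : realType) (n : nat).
Implicit Types (u v : 'cV[R[i]]_n) (s t : R).
Local Open Scope complex_scope.

Lemma Re_realM s (z : R[i]) : complex.Re (s%:C * z) = s * complex.Re z.
Proof. by case: z => a b /=; ring. Qed.

Lemma Im_realM s (z : R[i]) : complex.Im (s%:C * z) = s * complex.Im z.
Proof. by case: z => a b /=; ring. Qed.

Lemma Re_dotC u v : complex.Re (dotC u v) =
  \sum_(i < n) (complex.Re (u i 0) * complex.Re (v i 0) +
                complex.Im (u i 0) * complex.Im (v i 0)).
Proof.
rewrite raddf_sum; apply: eq_bigr => i _.
by case: (u i 0) (v i 0) => [a b] [c d] /=; ring.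
Qed.

Lemma dotC_conj u v : dotC u v = conjc (dotC v u).
Proof.
by rewrite /dotC rmorph_sum; apply: eq_bigr => i _; rewrite rmorphM /= conjcK mulrC.
Qed.

Lemma dotCZl z u v : dotC (z *: u) v = z * dotC u v.
Proof. by rewrite /dotC mulr_sumr; apply: eq_bigr => i _; rewrite mxE mulrA. Qed.

Lemma dotCZr z u v : dotC u (z *: v) = conjc z * dotC u v.
Proof. by rewrite dotC_conj dotCZl rmorphM /= -dotC_conj. Qed.

Lemma dotC_suml m (F : 'I_m -> 'cV[R[i]]_n) v :
  dotC (\sum_(j < m) F j) v = \sum_(j < m) dotC (F j) v.
Proof.
rewrite /dotC exchange_big /=; apply: eq_bigr => i _.
by rewrite summxE mulr_suml.
Qed.

Lemma dotC_selfadjoint (M : 'M[R[i]]_n) u v :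
  selfadjointC M -> dotC (M *m u) v = dotC u (M *m v).
Proof.
move=> saM; have dotC_mx x y : dotC x y = ((map_mx conjc y)^T *m x) 0 0.
  by rewrite mxE; apply: eq_bigr => i _; rewrite !mxE mulrC.
have saM' : (map_mx conjc M)^T = M by rewrite map_trmx.
by rewrite !dotC_mx map_mxM trmx_mul [(map_mx _ M)^T]saM' mulmxA.
Qed.

Lemma Re_dotC_ge0 u : 0 <= complex.Re (dotC u u).
Proof. by rewrite Re_dotC; apply: sumr_ge0 => i _; rewrite addr_ge0 // -expr2 sqr_ge0. Qed.

Lemma normC_sqr u : normC u ^+ 2 = complex.Re (dotC u u).
Proof. by rewrite sqr_sqrtr // Re_dotC_ge0. Qed.

Lemma Re_dotC_lincomb u v s t :
  complex.Re (dotC (s%:C *: u + t%:C *: v) (s%:C *: u + t%:C *: v)) =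
  complex.Re (dotC u u) * s ^+ 2 + 2 * complex.Re (dotC u v) * s * t +
  complex.Re (dotC v v) * t ^+ 2.
Proof.
rewrite !Re_dotC !(mulr_suml, mulr_sumr) -!big_split; apply: eq_bigr => i _.
by rewrite !mxE; case: (u i 0) (v i 0) => [a b] [c d] /=; ring.
Qed.

Lemma Re_dotC_le_normC u v : complex.Re (dotC u v) <= normC u * normC v.
Proof.
apply: quadratic_form_ge0_le_sqrt; rewrite ?Re_dotC_ge0 // => s t.
by rewrite -Re_dotC_lincomb Re_dotC_ge0.
Qed.

Lemma normC_triangle u v : normC (u + v) <= normC u + normC v.
Proof.
rewrite -ler_sqr ?nnegrE ?addr_ge0 ?sqrtr_ge0 // normC_sqr sqrrD !normC_sqr.
have := Re_dotC_lincomb u v 1 1; rewrite !scale1r expr1n !mulr1 => ->.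
by rewrite lerD2r lerD2l; have := Re_dotC_le_normC u v; lra.
Qed.

Lemma normCZ s u : normC (s%:C *: u) = `|s| * normC u.
Proof.
rewrite /normC dotCZl dotCZr conjc_real mulrA -rmorphM Re_realM.
by rewrite sqrtrM ?sqr_ge0 // -expr2 sqrtr_sqr.
Qed.

Lemma normC_sum m (F : 'I_m -> 'cV[R[i]]_n) :
  normC (\sum_(j < m) F j) <= \sum_(j < m) normC (F j).
Proof.
elim/big_rec2: _ => [|j x y _ le_xy].
  by rewrite /normC /dotC big1 ?sqrtr0 // => i _; rewrite mxE mul0r.
by apply: le_trans (normC_triangle _ _) _; rewrite lerD2l.
Qed.

End ComplexInnerProduct.

Section SpectralCalculus.
Variables (R : realType) (n : nat) (lam : 'I_n -> R) (psi : 'I_n -> 'cV[R[i]]_n).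
Implicit Types (g h : R -> R) (v phi : 'cV[R[i]]_n).
Local Open Scope complex_scope.

Lemma specCB g h phi :
  specC g lam psi phi - specC h lam psi phi = specC (g \- h) lam psi phi.
Proof.
rewrite /specC -sumrB; apply: eq_bigr => k _.
by rewrite -scalerBl -mulrBl !complexr0 -rmorphB.
Qed.

Lemma specC_lincomb m (c : 'I_m -> R) (h : 'I_m -> R -> R) phi :
  \sum_(j < m) (c j)%:C *: specC (h j) lam psi phi =
  specC (fun x => \sum_(j < m) c j * h j x) lam psi phi.
Proof.
rewrite /specC; under eq_bigr => j _ do rewrite scaler_sumr.
rewrite exchange_big /=; apply: eq_bigr => k _.
rewrite complexr0 rmorph_sum mulr_suml scaler_suml; apply: eq_bigr => j _.
by rewrite scalerA mulrA -rmorphM.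
Qed.

Hypothesis ortho : orthonormalC psi.

Lemma dotC_basis_comb (d : 'I_n -> R[i]) j :
  dotC (\sum_(k < n) d k *: psi k) (psi j) = d j.
Proof.
rewrite dotC_suml (bigD1 j) //= big1 ?addr0 => [|k kj].
  by rewrite dotCZl ortho eqxx mulr1.
by rewrite dotCZl ortho (negbTE kj) mulr0.
Qed.

Lemma basis_expansionC v : v = \sum_(k < n) dotC v (psi k) *: psi k.
Proof.
(* The columns of the square matrix P are orthonormal, so P^* P = 1 forces P P^* = 1. *)
pose P := \matrix_(i, k) psi k i 0 : 'M[R[i]]_n.
have PtP : (map_mx conjc P)^T *m P = 1%:M.
  apply/matrixP => j k; rewrite !mxE eq_sym -ortho /dotC.
  by apply: eq_bigr => i _; rewrite !mxE mulrC.
apply/matrixP => i j; rewrite (ord1 j).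
rewrite -[v in LHS]mul1mx -(mulmx1C PtP) -mulmxA mxE summxE; apply: eq_bigr => k _.
rewrite !mxE mulrC; congr (_ * _).
by apply: eq_bigr => l _; rewrite !mxE mulrC.
Qed.

Lemma normC_basis_comb (d : 'I_n -> R[i]) :
  normC (\sum_(k < n) d k *: psi k) =
  Num.sqrt (\sum_(k < n) (complex.Re (d k) ^+ 2 + complex.Im (d k) ^+ 2)).
Proof.
rewrite /normC dotC_suml raddf_sum; congr Num.sqrt; apply: eq_bigr => k _.
rewrite dotCZl dotC_conj dotC_basis_comb.
by case: (d k) => a b /=; ring.
Qed.

Lemma normC_specC_le g eps phi : 0 <= eps -> (forall k, `|g (lam k)| <= eps) ->
  normC (specC g lam psi phi) <= eps * normC phi.
Proof.
move=> eps_ge0 g_le.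
rewrite {2}(basis_expansionC phi) !normC_basis_comb -(ger0_norm eps_ge0).
rewrite -sqrtr_sqr -sqrtrM ?sqr_ge0 // ler_wsqrtr // mulr_sumr ler_sum // => k _.
rewrite complexr0 Re_realM Im_realM !exprMn -mulrDr.
rewrite ler_wpM2r ?addr_ge0 ?sqr_ge0 //.
by have := g_le k; rewrite ler_norml => /andP[? ?]; nra.
Qed.

End SpectralCalculus.

Section ComplexCauchyProblem.
Variables (R : realType) (n : nat) (A : 'M[R[i]]_n) (delta T : R)
  (phi : 'cV[R[i]]_n) (w : R -> 'cV[R[i]]_n).
Hypotheses (saA : selfadjointC A) (sol : cauchy_solC A delta T phi w).
Local Open Scope complex_scope.

Lemma Re_dotC_fun (x : R -> 'cV[R[i]]_n) p :
  (fun s => complex.Re (dotC (x s) p)) =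
  \sum_(i < n) ((fun s => complex.Re (x s i 0)) * cst (complex.Re (p i 0)) +
                (fun s => complex.Im (x s i 0)) * cst (complex.Im (p i 0))).
Proof. by apply: funext => s; rewrite Re_dotC fct_sumE. Qed.

Lemma Re_dotC_sol_continuous p :
  {within `[0, T], continuous (fun s => complex.Re (dotC (w s) p))}.
Proof.
case: sol => _ [wRe [wIm _]]; rewrite Re_dotC_fun.
apply: within_continuous_sum => i; apply: within_continuousD;
  by apply: within_continuousM => // x; apply: cvg_cst.
Qed.

Lemma Re_dotC_sol_derive p t : 0 < t < T ->
  is_derive t 1 (fun s => complex.Re (dotC (w s) p))
    (- complex.Re (dotC ((A - delta%:C%:M) *m w t) p)).
Proof.
case: sol => _ [_ [_ w']] tT; rewrite Re_dotC_fun.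
have dRe := is_derive_sum (fun i => is_deriveD
  (is_deriveM (w' t tT i).1 (is_derive_cst (complex.Re (p i 0)) t 1))
  (is_deriveM (w' t tT i).2 (is_derive_cst (complex.Im (p i 0)) t 1))).
apply: is_derive_eq; rewrite Re_dotC -sumrN; apply: eq_bigr => i _.
by rewrite /GRing.scale /= !raddfN /=; ring.
Qed.

Lemma dotC_sol_eigen p (l : R) : A *m p = l%:C *: p ->
  forall t, 0 <= t <= T ->
  dotC (w t) p = (expR (- ((l - delta) * t)))%:C * dotC phi p.
Proof.
have saM : selfadjointC (A - delta%:C%:M).
  rewrite /selfadjointC linearB /= tr_scalar_mx map_mxB /=.
  by rewrite saA map_scalar_mx; congr (_ - _%:M); exact: conjc_real.
have Re_sol q : A *m q = l%:C *: q -> forall t, 0 <= t <= T ->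
    complex.Re (dotC (w t) q) = expR (- ((l - delta) * t)) * complex.Re (dotC phi q).
  move=> Aq; case: sol => w0 _; rewrite -w0.
  apply: (linear_ode_expR (@Re_dotC_sol_continuous q)) => s sT.
  suff -> : (l - delta) * complex.Re (dotC (w s) q) =
      complex.Re (dotC ((A - delta%:C%:M) *m w s) q) by exact: Re_dotC_sol_derive.
  rewrite dotC_selfadjoint // mulmxBl Aq mul_scalar_mx -scalerBl dotCZr.
  by rewrite -(rmorphB (real_complex R)) conjc_real Re_realM.
move=> Ap t tT.
(* The imaginary part is the real part against the eigenvector 'i p. *)
have Aip : A *m ('i *: p) = l%:C *: ('i *: p).
  by rewrite -scalemxAr Ap !scalerA mulrC.
have Im_Re u : complex.Im (dotC u p) = complex.Re (dotC u ('i *: p)).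
  by rewrite dotCZr; case: (dotC u p) => a b /=; ring.
apply/eqP; rewrite eq_complex Re_realM Im_realM !Im_Re.
by rewrite (Re_sol p) // (Re_sol ('i *: p)) // !eqxx.
Qed.

Lemma sol_specC (lam : 'I_n -> R) (psi : 'I_n -> 'cV[R[i]]_n) :
  orthonormalC psi -> (forall k, A *m psi k = (lam k)%:C *: psi k) ->
  forall t, 0 <= t <= T ->
  w t = specC (fun x => expR (- ((x - delta) * t))) lam psi phi.
Proof.
move=> ortho eig t tT; rewrite {1}(basis_expansionC ortho (w t)).
by apply: eq_bigr => k _; rewrite (dotC_sol_eigen (eig k)).
Qed.

End ComplexCauchyProblem.

Section ExponentialSumError.
Local Open Scope complex_scope.

Lemma exp_sum_errorC (R : realType) (n m : nat) (A : 'M[R[i]]_n)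
    (lam : 'I_n -> R) (psi : 'I_n -> 'cV[R[i]]_n) (g : R -> R)
    (a b : 'I_m -> R) (eps eps0 delta T : R) (phi : 'cV[R[i]]_n)
    (w wt : R -> 'cV[R[i]]_n) :
  selfadjointC A -> orthonormalC psi ->
  (forall k, A *m psi k = (lam k)%:C *: psi k) ->
  cauchy_solC A delta T phi w ->
  (forall j, 0 <= a j) -> (forall j, 0 < b j <= T) ->
  0 <= eps -> (forall k, `|rexp a b (lam k) - g (lam k)| <= eps) ->
  (forall t, 0 < t <= T -> normC (wt t - w t) <= eps0 * normC phi) ->
  normC (\sum_(j < m) (a j * expR (- (b j * delta)))%:C *: wt (b j) -
         specC g lam psi phi)
    <= (eps + eps0 * rexp a b delta) * normC phi.
Proof.
move=> saA ortho eig sol a_ge0 b_in eps_ge0 r_approx wt_err.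
set al := fun j => a j * expR (- (b j * delta)).
have al_ge0 j : 0 <= al j by rewrite mulr_ge0 ?expR_ge0.
have sum_w : \sum_(j < m) (al j)%:C *: w (b j) = specC (rexp a b) lam psi phi.
  have b_ge0 j : 0 <= b j <= T by case/andP: (b_in j) => /ltW -> ->.
  under eq_bigr => j _ do rewrite (sol_specC saA sol ortho eig (b_ge0 j)).
  rewrite specC_lincomb; congr specC; apply: funext => x.
  rewrite /rexp; apply: eq_bigr => j _; rewrite /al -mulrA -expRD.
  by congr (_ * expR _); ring.
have -> : \sum_(j < m) (al j)%:C *: wt (b j) - specC g lam psi phi =
    \sum_(j < m) (al j)%:C *: (wt (b j) - w (b j)) + specC (rexp a b \- g) lam psi phi.
  rewrite -specCB -sum_w addrA -big_split /=; congr (_ - _).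
  by apply: eq_bigr => j _; rewrite -scalerDr subrK.
rewrite mulrDl [leRHS]addrC; apply: le_trans (normC_triangle _ _) _.
apply: lerD; last exact: normC_specC_le.
apply: le_trans (normC_sum _) _.
rewrite mulrAC mulrC -[rexp _ _ _]/(\sum_(j < m) al j) mulr_suml ler_sum // => j _.
by rewrite normCZ ger0_norm // ler_wpM2l // wt_err.
Qed.

End ExponentialSumError.

Section RealEmbedding.
Variable R : realType.
Local Notation cplx := (map_mx (real_complex R)).
Local Open Scope complex_scope.

Lemma dotC_cplx n (u v : 'cV[R]_n) : dotC (cplx u) (cplx v) = (dotR u v)%:C.
Proof.
rewrite /dotC /dotR rmorph_sum; apply: eq_bigr => i _.
by rewrite !mxE conjc_real rmorphM.
Qed.

Lemma normC_cplx n (u : 'cV[R]_n) : normC (cplx u) = normR u.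
Proof. by rewrite /normC dotC_cplx. Qed.

Lemma selfadjointC_cplx n (A : 'M[R]_n) : selfadjointR A -> selfadjointC (cplx A).
Proof.
by move=> saA; apply/matrixP => i j; rewrite !mxE conjc_real -[in RHS]saA mxE.
Qed.

Lemma orthonormalC_cplx n (psi : 'I_n -> 'cV[R]_n) :
  orthonormalR psi -> orthonormalC (fun k => cplx (psi k)).
Proof. by move=> ortho j k; rewrite dotC_cplx ortho rmorph_nat. Qed.

Lemma specC_cplx n (g : R -> R) (lam : 'I_n -> R) (psi : 'I_n -> 'cV[R]_n) phi :
  specC g lam (fun k => cplx (psi k)) (cplx phi) = cplx (specR g lam psi phi).
Proof.
rewrite /specC /specR map_mx_sum; apply: eq_bigr => k _.
by rewrite map_mxZ dotC_cplx rmorphM.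
Qed.

Lemma cauchy_solC_cplx n (A : 'M[R]_n) delta T phi w :
  cauchy_solR A delta T phi w ->
  cauchy_solC (cplx A) delta T (cplx phi) (fun t => cplx (w t)).
Proof.
case=> w0 [w_cont w_der]; split; first by rewrite w0.
have Re_cplx i : (fun t => complex.Re (cplx (w t) i 0)) = fun t => w t i 0.
  by apply: funext => t; rewrite mxE.
have Im_cplx i : (fun t => complex.Im (cplx (w t) i 0)) = cst 0.
  by apply: funext => t; rewrite mxE.
have rhs_cplx t : (cplx A - delta%:C%:M) *m cplx (w t) =
    cplx ((A - delta%:M) *m w t).
  by rewrite map_mxM map_mxB map_scalar_mx.
split; [by move=> i; rewrite Re_cplx | split].
  by move=> i; rewrite Im_cplx => x; apply: cvg_cst.
move=> t tT i; rewrite rhs_cplx Re_cplx Im_cplx !raddfN mxE /= oppr0.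
by split; [exact: w_der | exact: is_derive_cst].
Qed.

Lemma exp_sum_errorR (n m : nat) (A : 'M[R]_n)
    (lam : 'I_n -> R) (psi : 'I_n -> 'cV[R]_n) (g : R -> R)
    (a b : 'I_m -> R) (eps eps0 delta T : R) (phi : 'cV[R]_n)
    (w wt : R -> 'cV[R]_n) :
  selfadjointR A -> orthonormalR psi ->
  (forall k, A *m psi k = lam k *: psi k) ->
  cauchy_solR A delta T phi w ->
  (forall j, 0 <= a j) -> (forall j, 0 < b j <= T) ->
  0 <= eps -> (forall k, `|rexp a b (lam k) - g (lam k)| <= eps) ->
  (forall t, 0 < t <= T -> normR (wt t - w t) <= eps0 * normR phi) ->
  normR (\sum_(j < m) (a j * expR (- (b j * delta))) *: wt (b j) -
         specR g lam psi phi)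
    <= (eps + eps0 * rexp a b delta) * normR phi.
Proof.
move=> saA ortho eig sol a_ge0 b_in eps_ge0 r_approx wt_err.
rewrite -!normC_cplx map_mxB map_mx_sum -specC_cplx.
under eq_bigr => j _ do rewrite map_mxZ.
apply: (exp_sum_errorC (wt := fun t => cplx (wt t))
  (selfadjointC_cplx saA) (orthonormalC_cplx ortho) _ (cauchy_solC_cplx sol))
  => // [k | t tT].
  by rewrite -map_mxM eig map_mxZ.
by rewrite -map_mxB !normC_cplx wt_err.
Qed.

End RealEmbedding.

Lemma approx_on_sorted_spectrum (R : realType) n (lam : 'I_n.+1 -> R)
    (r g : R -> R) (eps : R) :
  (forall j k : 'I_n.+1, (j <= k)%N -> lam j <= lam k) ->
  (forall x, lam ord0 <= x <= lam ord_max -> `|r x - g x| <= eps) ->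
  [/\ 0 <= eps, r (lam ord0) <= g (lam ord0) + eps &
      forall k, `|r (lam k) - g (lam k)| <= eps].
Proof.
move=> mono approx.
have approx_spec k : `|r (lam k) - g (lam k)| <= eps.
  by apply: approx; rewrite !mono // -ltnS.
split=> //; [exact: le_trans (normr_ge0 _) (approx_spec ord0) |].
exact: ler_distlDr (approx_spec ord0).
Qed.

Theorem theorem2 :
  (* real Hilbert space H = R^(n+1) *)
  (forall (R : realType) (n : nat) (A : 'M[R]_n.+1)
     (lam : 'I_n.+1 -> R) (psi : 'I_n.+1 -> 'cV[R]_n.+1)
     (f : R -> R) (m : nat) (a b : 'I_m -> R) (eps eps0 : R)
     (phi : 'cV[R]_n.+1) (w wt : R -> 'cV[R]_n.+1),
     selfadjointR A ->
     orthonormalR psi ->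
     (forall k, A *m psi k = lam k *: psi k) ->
     (forall j k : 'I_n.+1, (j <= k)%N -> lam j <= lam k) ->
     0 < lam ord0 ->
     (forall x, lam ord0 <= x <= lam ord_max -> f x != 0) ->
     (forall k, 0 < f (lam k)) ->
     (0 < m)%N ->
     (forall i, 0 < a i) -> (forall i, 0 < b i) ->
     (forall x, lam ord0 <= x <= lam ord_max ->
        `|rexp a b x - (f x)^-1| <= eps) ->
     cauchy_solR A (lam ord0) (maxb b) phi w ->
     0 <= eps0 ->
     (forall t, 0 < t <= maxb b -> normR (wt t - w t) <= eps0 * normR phi) ->
     let delta := lam ord0 in
     let u := specR (fun x => (f x)^-1) lam psi phi in
     let uhat := \sum_(i < m) (a i * expR (- (b i * delta))) *: wt (b i) in
     normR (uhat - u) <= (eps + eps0 * ((f delta)^-1 + eps)) * normR phi)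
  /\
  (* complex Hilbert space H = C^(n+1), C = R[i] *)
  (forall (R : realType) (n : nat) (A : 'M[R[i]]_n.+1)
     (lam : 'I_n.+1 -> R) (psi : 'I_n.+1 -> 'cV[R[i]]_n.+1)
     (f : R -> R) (m : nat) (a b : 'I_m -> R) (eps eps0 : R)
     (phi : 'cV[R[i]]_n.+1) (w wt : R -> 'cV[R[i]]_n.+1),
     selfadjointC A ->
     orthonormalC psi ->
     (forall k, A *m psi k = (Complex (lam k) 0) *: psi k) ->
     (forall j k : 'I_n.+1, (j <= k)%N -> lam j <= lam k) ->
     0 < lam ord0 ->
     (forall x, lam ord0 <= x <= lam ord_max -> f x != 0) ->
     (forall k, 0 < f (lam k)) ->
     (0 < m)%N ->
     (forall i, 0 < a i) -> (forall i, 0 < b i) ->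
     (forall x, lam ord0 <= x <= lam ord_max ->
        `|rexp a b x - (f x)^-1| <= eps) ->
     cauchy_solC A (lam ord0) (maxb b) phi w ->
     0 <= eps0 ->
     (forall t, 0 < t <= maxb b -> normC (wt t - w t) <= eps0 * normC phi) ->
     let delta := lam ord0 in
     let u := specC (fun x => (f x)^-1) lam psi phi in
     let uhat := \sum_(i < m) (Complex (a i * expR (- (b i * delta))) 0) *: wt (b i) in
     normC (uhat - u) <= (eps + eps0 * ((f delta)^-1 + eps)) * normC phi).
Proof.
split=> R n A lam psi f m a b eps eps0 phi w wt saA ortho eig mono _ _ _ _
  a_gt0 b_gt0 approx sol eps0_ge0 wt_err /=.
- have [eps_ge0 r_delta r_spec] := approx_on_sorted_spectrum mono approx.
  apply: le_trans (exp_sum_errorR saA ortho eig sol _ _ eps_ge0 r_spec wt_err) _.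
  + by move=> j; rewrite ltW.
  + by move=> j; rewrite b_gt0; apply: le_bigmax.
  by rewrite ler_wpM2r ?sqrtr_ge0 // lerD2l ler_wpM2l.
- have [eps_ge0 r_delta r_spec] := approx_on_sorted_spectrum mono approx.
  apply: le_trans (exp_sum_errorC saA ortho eig sol _ _ eps_ge0 r_spec wt_err) _.
  + by move=> j; rewrite ltW.
  + by move=> j; rewrite b_gt0; apply: le_bigmax.
  by rewrite ler_wpM2r ?sqrtr_ge0 // lerD2l ler_wpM2l.
Qed.
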